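(* Let $f$ be a $C^1$ diffeomorphism of $M=\mathbb{R}^d/\mathbb{Z}^d$ and let $x\in M$ be regularly hyperbolic with coefficient $0<\lambda<1$. Then for all positive integers $n,m$ with $n>1/\log(1/\lambda)$ and $n>m$, there is a continuous linear operator $\Upsilon:X_n\to X_m$ with $\Upsilon(\Gamma_{o(x)}\eta)=\eta$ and $\Gamma_{o(x)}(\Upsilon\eta)=\eta$ for all $\eta\in X_n$.
   Context: Tangent spaces identified with $\mathbb{R}^d$, $|\cdot|$ Euclidean norm. $o(x)=(f^k(x))_{k}$, $(\Gamma_{\mathbf{x}}\eta)_k=\eta_k-Df(x_{k-1})\eta_{k-1}$; $\|\eta\|_n=\sup_k e^{-|k|/n}|\eta_k|$, $X_n=\{\|\eta\|_n<\infty\}$. A point $x$ is regularly hyperbolic (with coefficient $\lambda\in(0,1)$) if, with $x_k=f^k(x)$, there is a splitting $T_{x_k}M=E^s(x_k)\oplus E^u(x_k)$ with $Df(x_k)E^{s}(x_k)=E^{s}(x_{k+1})$, $Df(x_k)E^{u}(x_k)=E^{u}(x_{k+1})$, and for each sufficiently small $\varepsilon>0$ a constant $c(x,\varepsilon)$ such that for all $k\in\mathbb{Z}$, $j>0$: $|Df^j(x_k)\eta|\le c(x,\varepsilon)\lambda^je^{\varepsilon|k|}|\eta|$ for $\eta\in E^s(x_k)$, $|Df^{-j}(x_k)\eta|\le c(x,\varepsilon)\lambda^je^{\varepsilon|k|}|\eta|$ for $\eta\in E^u(x_k)$, and if $\eta=\eta^s+\eta^u$ is the splitting of $\eta\in T_{x_k}M$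 then $|\eta^s|,|\eta^u|\le c(x,\varepsilon)e^{\varepsilon|k|}|\eta|$. *)

From Stdlib Require Import Reals ZArith ClassicalEpsilon.
From mathcomp Require Import all_boot.
Set Implicit Arguments. Unset Strict Implicit.
Open Scope R_scope.

Definition vec (d : nat) := 'I_d -> R.
Definition mat (d : nat) := 'I_d -> 'I_d -> R.

Definition rsum (d : nat) (f : 'I_d -> R) : R := foldr Rplus 0 (map f (enum 'I_d)).

Definition vzero (d : nat) : vec d := fun _ => 0.
Definition vadd d (u v : vec d) : vec d := fun i => u i + v i.
Definition vsub d (u v : vec d) : vec d := fun i => u i - v i.
Definition vscale d (a : R) (u : vec d) : vec d := fun i => a * u i.
Definition vnorm d (v : vec d) : R := sqrt (rsum (fun i => v i ^ 2)).
Definition mapply d (A : mat d) (v : vec d) : vec d := fun i => rsum (fun j => A i j * v j).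

Definition frechet d (F : vec d -> vec d) (x : vec d) (A : mat d) : Prop :=
  forall eps, 0 < eps -> exists delta, 0 < delta /\ forall y,
    vnorm (vsub y x) < delta ->
    vnorm (vsub (vsub (F y) (F x)) (mapply A (vsub y x))) <= eps * vnorm (vsub y x).

Definition C1_with d (F : vec d -> vec d) (DF : vec d -> mat d) : Prop :=
  (forall x, frechet F x (DF x)) /\
  (forall x i j eps, 0 < eps -> exists delta, 0 < delta /\ forall y,
      vnorm (vsub y x) < delta -> Rabs (DF y i j - DF x i j) < eps).

(* The torus M = R^d / Z^d: points are represented by vectors, modulo Z^d *)
Definition int_vec d (v : vec d) : Prop := forall i, exists z : Z, v i = IZR z.
Definition teq d (x y : vec d) : Prop := int_vec (vsub x y).

(* f is a C^1 diffeomorphism of M, given through C^1 lifts F (of f) and G (of f^-1),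
   with derivatives DF, DG (tangent spaces identified with R^d). *)
Definition torus_C1_diffeo d (F : vec d -> vec d) (DF : vec d -> mat d)
    (G : vec d -> vec d) (DG : vec d -> mat d) : Prop :=
  C1_with F DF /\ C1_with G DG /\
  (forall x y, teq x y -> teq (F x) (F y)) /\
  (forall x y, teq x y -> teq (G x) (G y)) /\
  (forall x, teq (G (F x)) x) /\ (forall x, teq (F (G x)) x).

Definition torbit d (F G : vec d -> vec d) (x : vec d) (k : Z) : vec d :=
  match k with
  | Z0 => x
  | Zpos p => iter (Pos.to_nat p) F x
  | Zneg p => iter (Pos.to_nat p) G x
  end.

(* Df^j(x_k) = Df(x_{k+j-1}) ... Df(x_k)  (chain rule) *)
Fixpoint dfpow d (DF : vec d -> mat d) (orb : Z -> vec d) (k : Z) (j : nat) (v : vec d)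
  : vec d :=
  match j with
  | O => v
  | S j' => mapply (DF (orb (k + Z.of_nat j')%Z)) (dfpow DF orb k j' v)
  end.

(* Df^{-j}(x_k) = D(f^-1)(x_{k-j+1}) ... D(f^-1)(x_k) *)
Fixpoint dfneg d (DG : vec d -> mat d) (orb : Z -> vec d) (k : Z) (j : nat) (v : vec d)
  : vec d :=
  match j with
  | O => v
  | S j' => mapply (DG (orb (k - Z.of_nat j')%Z)) (dfneg DG orb k j' v)
  end.

Definition is_subspace d (E : vec d -> Prop) : Prop :=
  E (@vzero d) /\ (forall u v, E u -> E v -> E (vadd u v)) /\
  (forall a u, E u -> E (vscale a u)).

Definition splitting d (Es Eu : vec d -> Prop) : Prop :=
  is_subspace Es /\ is_subspace Eu /\
  (forall v, Es v -> Eu v -> v = @vzero d) /\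
  (forall v, exists s u, Es s /\ Eu u /\ v = vadd s u).

Definition regularly_hyperbolic d (DF DG : vec d -> mat d) (orb : Z -> vec d)
    (lam : R) : Prop :=
  exists Es Eu : Z -> vec d -> Prop,
    (forall k, splitting (Es k) (Eu k)) /\
    (forall k v, Es (k + 1)%Z v <-> exists w, Es k w /\ v = mapply (DF (orb k)) w) /\
    (forall k v, Eu (k + 1)%Z v <-> exists w, Eu k w /\ v = mapply (DF (orb k)) w) /\
    exists eps0, 0 < eps0 /\ forall eps, 0 < eps < eps0 -> exists c : R,
      (forall (k : Z) (j : nat), (0 < j)%nat -> forall v, Es k v ->
         vnorm (dfpow DF orb k j v) <= c * lam ^ j * exp (eps * Rabs (IZR k)) * vnorm v) /\
      (forall (k : Z) (j : nat), (0 < j)%nat -> forall v, Eu k v ->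
         vnorm (dfneg DG orb k j v) <= c * lam ^ j * exp (eps * Rabs (IZR k)) * vnorm v) /\
      (forall (k : Z) v s u, Es k s -> Eu k u -> v = vadd s u ->
         vnorm s <= c * exp (eps * Rabs (IZR k)) * vnorm v /\
         vnorm u <= c * exp (eps * Rabs (IZR k)) * vnorm v).

Definition seqv (d : nat) := Z -> vec d.

Definition wset d (n : nat) (eta : seqv d) (r : R) : Prop :=
  exists k : Z, r = exp (- Rabs (IZR k) / INR n) * vnorm (eta k).

Definition wnorm d (n : nat) (eta : seqv d) : R :=
  epsilon (inhabits 0) (fun s => is_lub (wset n eta) s).

Definition inX d (n : nat) (eta : seqv d) : Prop :=
  exists C, forall k : Z, exp (- Rabs (IZR k) / INR n) * vnorm (eta k) <= C.

Definition GammaOp d (DF : vec d -> mat d) (orb : Z -> vec d) (eta : seqv d) : seqv d :=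
  fun k => vsub (eta k) (mapply (DF (orb (k - 1)%Z)) (eta (k - 1)%Z)).

(* Write A_k = Df(x_k), B_k = D(f^-1)(x_k) and let π^s_k, π^u_k be the
   projections of the splitting R^d = E^s(x_k) ⊕ E^u(x_k).  The inverse of
   (Γη)_k = η_k - A_{k-1} η_{k-1} is given by the two one-sided series
     (Υη)_k = Σ_{j≥0} Df^j(x_{k-j}) π^s η_{k-j} - Σ_{j≥1} Df^{-j}(x_{k+j}) π^u η_{k+j}. *)

From Stdlib Require Import Reals ZArith.
From mathcomp Require Import all_boot.
From Stdlib Require Import Lra Lia FunctionalExtensionality ClassicalEpsilon.
From Coquelicot Require Import Coquelicot.
Open Scope R_scope.
Set Implicit Arguments. Unset Strict Implicit.

(* Coquelicot's lemmas on convergent series, specialised to real sequences so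
   that they unify directly with goals stated over R. *)
Lemma ex_seriesR_ext (a b : nat -> R) : (forall n, a n = b n) -> ex_series a -> ex_series b.
Proof. by move=> H; exact: ex_series_ext. Qed.

Lemma ex_seriesR_plus (a b : nat -> R) :
  ex_series a -> ex_series b -> ex_series (fun n => a n + b n).
Proof. by move=> Ha Hb; exact: (ex_series_plus a b Ha Hb). Qed.

Lemma ex_seriesR_scal (c : R) (a : nat -> R) : ex_series a -> ex_series (fun n => c * a n).
Proof. by move=> Ha; exact: (ex_series_scal_l c a Ha). Qed.

Lemma ex_seriesR_le (a b : nat -> R) :
  (forall n, Rabs (a n) <= b n) -> ex_series b -> ex_series a.
Proof. by move=> H Hb; apply: (ex_series_le a b). Qed.

Lemma ex_series_geom_scal (M q : R) : 0 <= q < 1 -> ex_series (fun j => M * q ^ j).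
Proof. by move=> Hq; apply: ex_seriesR_scal; apply: ex_series_geom; rewrite Rabs_right; lra. Qed.

Lemma ex_series_zero : ex_series (fun _ : nat => 0).
Proof.
apply: (ex_seriesR_ext (a := fun n => 0 * (/2) ^ n)); first by move=> n; ring.
by apply: ex_series_geom_scal; lra.
Qed.

Lemma Series_zero : Series (fun _ : nat => 0) = 0.
Proof.
rewrite (Series_ext _ (fun n => 0 * (/2) ^ n)); last by move=> n; ring.
by rewrite Series_scal_l; ring.
Qed.

Section FiniteSums.
Variable T : eqType.

Definition lsum (l : seq T) (f : T -> R) : R := foldr Rplus 0 (map f l).

Lemma lsum_cons x l f : lsum (x :: l) f = f x + lsum l f.
Proof. by []. Qed.

Lemma lsum_nil f : lsum [::] f = 0.
Proof. by []. Qed.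

Lemma lsum_ext l f g : (forall i, f i = g i) -> lsum l f = lsum l g.
Proof. by move=> H; elim: l => [|x l IH] //; rewrite !lsum_cons IH H. Qed.

Lemma lsum_plus l f g : lsum l (fun i => f i + g i) = lsum l f + lsum l g.
Proof. by elim: l => [|x l IH]; rewrite ?lsum_nil ?lsum_cons ?IH; lra. Qed.

Lemma lsum_scal l c f : lsum l (fun i => c * f i) = c * lsum l f.
Proof. by elim: l => [|x l IH]; rewrite ?lsum_nil ?lsum_cons ?IH; lra. Qed.

Lemma lsum_le l f g : (forall i, f i <= g i) -> lsum l f <= lsum l g.
Proof.
move=> H; elim: l => [|x l IH]; rewrite ?lsum_nil ?lsum_cons; first lra.
by have := H x; lra.
Qed.

Lemma lsum_nonneg l f : (forall i, 0 <= f i) -> 0 <= lsum l f.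
Proof.
move=> H; elim: l => [|x l IH]; rewrite ?lsum_nil ?lsum_cons; first lra.
by have := H x; lra.
Qed.

Lemma lsum_abs l f : Rabs (lsum l f) <= lsum l (fun i => Rabs (f i)).
Proof.
elim: l => [|x l IH]; rewrite ?lsum_nil ?lsum_cons; first by rewrite Rabs_R0; lra.
by have := Rabs_triang (f x) (lsum l f); lra.
Qed.

Lemma lsum_term l f i : (forall i, 0 <= f i) -> i \in l -> f i <= lsum l f.
Proof.
move=> H; elim: l => [|x l IH] //; rewrite in_cons lsum_cons => /orP [/eqP ->|Hi].
- by have := lsum_nonneg l H; lra.
- by have := IH Hi; have := H x; lra.
Qed.

Lemma lsum_sq l f : lsum l (fun i => f i ^ 2) <= (lsum l (fun i => Rabs (f i))) ^ 2.
Proof.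
elim: l => [|x l IH]; rewrite ?lsum_nil ?lsum_cons; first lra.
have H0 := lsum_nonneg l (fun i => Rabs_pos (f i)).
have Ha := Rabs_pos (f x).
have -> : f x ^ 2 = Rabs (f x) ^ 2 by rewrite -!Rsqr_pow2 -Rsqr_abs.
nra.
Qed.

Lemma lsum_series l (g : nat -> T -> R) :
  (forall i, ex_series (fun j => g j i)) ->
  ex_series (fun j => lsum l (g j)) /\
  Series (fun j => lsum l (g j)) = lsum l (fun i => Series (fun j => g j i)).
Proof.
move=> H; elim: l => [|x l [IHex IH]].
  split; first exact: (ex_seriesR_ext (a := fun _ => 0)) ex_series_zero.
  by rewrite lsum_nil (Series_ext _ (fun _ => 0)) // Series_zero.
split.
- apply: (ex_seriesR_ext (a := fun j => g j x + lsum l (g j))) => //.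
  exact: ex_seriesR_plus.
- rewrite lsum_cons -IH (Series_ext _ (fun j => g j x + lsum l (g j))) //.
  exact: Series_plus.
Qed.
End FiniteSums.

Ltac vext := apply: functional_extensionality => ?; rewrite /vsub /vadd /vscale /vzero; ring.

Section EuclideanNorm.
Variable d : nat.

Definition dimR : R := rsum (fun _ : 'I_d => 1).

Lemma rsumE (f : 'I_d -> R) : rsum f = lsum (enum 'I_d) f.
Proof. by []. Qed.

Lemma dimR_nonneg : 0 <= dimR.
Proof. by rewrite /dimR rsumE; apply: lsum_nonneg => _; lra. Qed.

Lemma vnorm_nonneg (v : vec d) : 0 <= vnorm v.
Proof. exact: sqrt_pos. Qed.

Lemma vnorm_comp (v : vec d) i : Rabs (v i) <= vnorm v.
Proof.
rewrite /vnorm -sqrt_Rsqr_abs Rsqr_pow2; apply: sqrt_le_1_alt.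
rewrite rsumE; apply: (lsum_term (f := fun i => v i ^ 2)); last by rewrite mem_enum.
by move=> j; nra.
Qed.

Lemma vnorm_l1 (v : vec d) : vnorm v <= rsum (fun i => Rabs (v i)).
Proof.
rewrite /vnorm -(sqrt_pow2 (rsum (fun i => Rabs (v i)))).
- by apply: sqrt_le_1_alt; rewrite !rsumE; exact: lsum_sq.
- by rewrite rsumE; apply: lsum_nonneg => i; exact: Rabs_pos.
Qed.

Lemma vnorm_bnd (v : vec d) b : (forall i, Rabs (v i) <= b) -> vnorm v <= b * dimR.
Proof.
move=> H; apply: Rle_trans (vnorm_l1 v) _.
by rewrite /dimR !rsumE -lsum_scal; apply: lsum_le => i; have := H i; lra.
Qed.

Lemma vnorm_add (u v : vec d) : vnorm (vadd u v) <= dimR * (vnorm u + vnorm v).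
Proof.
rewrite Rmult_comm; apply: vnorm_bnd => i; rewrite /vadd.
by have := Rabs_triang (u i) (v i); have := vnorm_comp u i; have := vnorm_comp v i; lra.
Qed.

Lemma vnorm_sub (u v : vec d) : vnorm (vsub u v) <= dimR * (vnorm u + vnorm v).
Proof.
rewrite Rmult_comm; apply: vnorm_bnd => i; rewrite /vsub /Rminus.
have := Rabs_triang (u i) (- v i); rewrite Rabs_Ropp.
by have := vnorm_comp u i; have := vnorm_comp v i; lra.
Qed.

Lemma vnorm_scale a (v : vec d) : vnorm (vscale a v) = Rabs a * vnorm v.
Proof.
rewrite /vnorm /vscale (_ : rsum _ = a ^ 2 * rsum (fun i => v i ^ 2)).
- rewrite sqrt_mult; first by rewrite -Rsqr_pow2 sqrt_Rsqr_abs.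
  + by nra.
  + by rewrite rsumE; apply: lsum_nonneg => i; nra.
- by rewrite !rsumE -lsum_scal; apply: lsum_ext => i; ring.
Qed.

Lemma vnorm_small (v : vec d) : (forall e, 0 < e -> vnorm v <= e) -> forall i, v i = 0.
Proof.
move=> H i; have Hc := vnorm_comp v i.
case: (Req_dec (v i) 0) => // Hn; have Hp : 0 < Rabs (v i) by apply: Rabs_pos_lt.
by have := H (Rabs (v i) / 2); lra.
Qed.
End EuclideanNorm.

Section LinearMaps.
Variable d : nat.

Definition lin (f : vec d -> vec d) : Prop := forall a b u v,
  f (vadd (vscale a u) (vscale b v)) = vadd (vscale a (f u)) (vscale b (f v)).

Definition bndL (L : vec d -> vec d) : Prop :=
  exists K, 0 <= K /\ forall v, vnorm (L v) <= K * vnorm v.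

Lemma lin_sub f : lin f -> forall u v, f (vsub u v) = vsub (f u) (f v).
Proof.
move=> Hf u v.
have E : forall u v : vec d, vsub u v = vadd (vscale 1 u) (vscale (-1) v) by move=> ? ?; vext.
by rewrite !E Hf.
Qed.

Lemma lin_scale f : lin f -> forall t v, f (vscale t v) = vscale t (f v).
Proof.
move=> Hf t v.
have E : forall v' : vec d, vscale t v' = vadd (vscale t v') (vscale 0 v') by move=> ?; vext.
by rewrite E Hf -E.
Qed.

Lemma lin_comp f g : lin f -> lin g -> lin (fun v => f (g v)).
Proof. by move=> Hf Hg a b u v; rewrite Hg Hf. Qed.

Lemma lin_mapply (A : mat d) : lin (mapply A).
Proof.
move=> a b u v; apply: functional_extensionality => i.
rewrite /mapply /vadd /vscale !rsumE -!lsum_scal -lsum_plus.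
by apply: lsum_ext => j; ring.
Qed.

Lemma bndL_comp (L1 L2 : vec d -> vec d) : bndL L1 -> bndL L2 -> bndL (fun u => L2 (L1 u)).
Proof.
move=> [K1 [H1 B1]] [K2 [H2 B2]]; exists (K2 * K1); split; first nra.
by move=> v; have := B2 (L1 v); have := B1 v; have := vnorm_nonneg v; nra.
Qed.

(* |A v| ≤ (Σ_ij |A_ij|) d |v|. *)
Lemma bndL_mapply (A : mat d) : bndL (mapply A).
Proof.
set S := rsum (fun i => rsum (fun j => Rabs (A i j))).
have HS : forall i, rsum (fun j => Rabs (A i j)) <= S.
  move=> i; rewrite /S rsumE.
  apply: (lsum_term (f := fun i => rsum (fun j => Rabs (A i j)))); last by rewrite mem_enum.
  by move=> k; rewrite rsumE; apply: lsum_nonneg => j; exact: Rabs_pos.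
have HS0 : 0 <= S.
  by rewrite /S rsumE; apply: lsum_nonneg => k; rewrite rsumE;
     apply: lsum_nonneg => j; exact: Rabs_pos.
exists (S * dimR d); split; first by have := dimR_nonneg d; nra.
move=> v; rewrite (_ : S * dimR d * vnorm v = (S * vnorm v) * dimR d); last ring.
apply: vnorm_bnd => i; rewrite /mapply rsumE; apply: Rle_trans (lsum_abs _ _) _.
apply: (Rle_trans _ (lsum (enum 'I_d) (fun j => vnorm v * Rabs (A i j)))).
  apply: lsum_le => j; rewrite Rabs_mult.
  by have := vnorm_comp v j; have := Rabs_pos (A i j); nra.
rewrite lsum_scal (Rmult_comm S); apply: Rmult_le_compat_l; first exact: vnorm_nonneg.
by have := HS i; rewrite rsumE.
Qed.
End LinearMaps.

(* Fréchet differentiability of H at y with derivative the map L; for L = mapply A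
   this is exactly [frechet H y A]. *)
Section Derivative.
Variable d : nat.

Definition frL (H : vec d -> vec d) (y : vec d) (L : vec d -> vec d) : Prop :=
  forall eps, 0 < eps -> exists delta, 0 < delta /\ forall w,
    vnorm (vsub w y) < delta ->
    vnorm (vsub (vsub (H w) (H y)) (L (vsub w y))) <= eps * vnorm (vsub w y).

Lemma frL_cont H y L : frL H y L -> bndL L -> forall e, 0 < e -> exists delta, 0 < delta /\
  forall w, vnorm (vsub w y) < delta -> vnorm (vsub (H w) (H y)) < e.
Proof.
move=> HL [K [HK0 HK]] e He; have [d1 [Hd1 H1]] := HL 1 Rlt_0_1.
have HD := dimR_nonneg d; set P := dimR d * (1 + K).
have HP : 0 <= P by rewrite /P; nra.
exists (Rmin d1 (e / (P + 1))); split; first by apply: Rmin_pos => //; apply: Rdiv_lt_0_compat; lra.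
move=> w Hw; set u := vsub w y in Hw *.
have Hw1 : vnorm u < d1 by have := Rmin_l d1 (e / (P + 1)); lra.
have Hw2 : vnorm u * (P + 1) < e.
  have Ee : e / (P + 1) * (P + 1) = e by field; lra.
  have Hlt := Rlt_le_trans _ _ _ Hw (Rmin_r d1 (e / (P + 1))).
  by have := Rmult_lt_compat_r (P + 1) _ _ ltac:(lra) Hlt; rewrite Ee.
rewrite (_ : vsub (H w) (H y) = vadd (vsub (vsub (H w) (H y)) (L u)) (L u)); last by vext.
apply: Rle_lt_trans (vnorm_add _ _) _.
have := H1 w Hw1; rewrite -/u => Hb; have := HK u => Hk; have Hu := vnorm_nonneg u.
suff : dimR d * (vnorm (vsub (vsub (H w) (H y)) (L u)) + vnorm (L u)) <= P * vnorm u by nra.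
by rewrite /P; apply: (Rle_trans _ (dimR d * ((1 + K) * vnorm u))); [apply: Rmult_le_compat_l|]; nra.
Qed.

Lemma int_eq (a b : vec d) : int_vec a -> int_vec b -> (forall i, Rabs (a i - b i) < 1) -> a = b.
Proof.
move=> Ha Hb H; apply: functional_extensionality => i.
have [z1 E1] := Ha i; have [z2 E2] := Hb i; have := H i; rewrite E1 E2 -minus_IZR => Hl.
suff -> : z1 = z2 by [].
case: (Z.eq_dec z1 z2) => // Hn; exfalso.
case: (Z_lt_le_dec (z1 - z2) 0) => Hc.
- have /IZR_le : (z1 - z2 <= -1)%Z by lia.
  by move: Hl; rewrite Rabs_left; [lra | apply: IZR_lt; lia].
- have /IZR_le : (1 <= z1 - z2)%Z by lia.
  by move: Hl; rewrite Rabs_right; [lra | apply: Rle_ge; apply: IZR_le; lia].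
Qed.

Lemma int_diff_locally_const H1 H2 y L1 L2 : (forall w, int_vec (vsub (H1 w) (H2 w))) ->
  frL H1 y L1 -> frL H2 y L2 -> bndL L1 -> bndL L2 -> exists delta, 0 < delta /\
  forall w, vnorm (vsub w y) < delta -> vsub (H1 w) (H2 w) = vsub (H1 y) (H2 y).
Proof.
move=> Hint F1 F2 B1 B2.
have [c1 [Hc1 C1]] := frL_cont F1 B1 (ltac:(lra) : 0 < /2).
have [c2 [Hc2 C2]] := frL_cont F2 B2 (ltac:(lra) : 0 < /2).
exists (Rmin c1 c2); split; first exact: Rmin_pos.
move=> w Hw; apply: int_eq => // j.
have h1 := C1 w ltac:(have := Rmin_l c1 c2; lra).
have h2 := C2 w ltac:(have := Rmin_r c1 c2; lra).
have g1 : Rabs (H1 w j - H1 y j) <= vnorm (vsub (H1 w) (H1 y)) := vnorm_comp _ j.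
have g2 : Rabs (H2 w j - H2 y j) <= vnorm (vsub (H2 w) (H2 y)) := vnorm_comp _ j.
rewrite /vsub (_ : H1 w j - H2 w j - (H1 y j - H2 y j)
                   = (H1 w j - H1 y j) + - (H2 w j - H2 y j)); last ring.
by have := Rabs_triang (H1 w j - H1 y j) (- (H2 w j - H2 y j)); rewrite Rabs_Ropp; lra.
Qed.

Lemma frL_sub H1 H2 y L1 L2 : frL H1 y L1 -> frL H2 y L2 ->
  frL (fun w => vsub (H1 w) (H2 w)) y (fun u => vsub (L1 u) (L2 u)).
Proof.
move=> F1 F2 e He; have HD := dimR_nonneg d.
set e' := e / (2 * (dimR d + 1)).
have He' : 0 < e' by apply: Rdiv_lt_0_compat; lra.
have He'D : dimR d * (2 * e') <= e.
  have : e' * (2 * (dimR d + 1)) = e by rewrite /e'; field; lra.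
  nra.
have [d1 [Hd1 G1]] := F1 e' He'; have [d2 [Hd2 G2]] := F2 e' He'.
exists (Rmin d1 d2); split; first exact: Rmin_pos.
move=> w Hw.
have g1 := G1 w ltac:(have := Rmin_l d1 d2; lra).
have g2 := G2 w ltac:(have := Rmin_r d1 d2; lra).
set u := vsub w y in g1 g2 *; have Hu := vnorm_nonneg u.
rewrite (_ : vsub (vsub (vsub (H1 w) (H2 w)) (vsub (H1 y) (H2 y))) (vsub (L1 u) (L2 u))
           = vsub (vsub (vsub (H1 w) (H1 y)) (L1 u)) (vsub (vsub (H2 w) (H2 y)) (L2 u)));
  last by vext.
apply: Rle_trans (vnorm_sub _ _) _.
apply: (Rle_trans _ (dimR d * (2 * e' * vnorm u))); first by apply: Rmult_le_compat_l; lra.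
by have := Rmult_le_compat_r (vnorm u) _ _ Hu He'D; lra.
Qed.

Lemma frL_locally_const H y L delta0 : 0 < delta0 ->
  (forall w, vnorm (vsub w y) < delta0 -> H w = H y) -> frL H y L -> lin L ->
  forall v, L v = @vzero d.
Proof.
move=> Hd0 Hconst HL HlinL v; apply: functional_extensionality; rewrite /vzero.
apply: vnorm_small => e He.
have Hv := vnorm_nonneg v.
set eps := e / (vnorm v + 1).
have Heps : 0 < eps by apply: Rdiv_lt_0_compat; lra.
have Hepsv : eps * vnorm v <= e.
  have : eps * (vnorm v + 1) = e by rewrite /eps; field; lra.
  have := Rmult_le_pos _ _ (Rlt_le _ _ Heps) (Rle_0_1); nra.
have [dl [Hdl Hw]] := HL eps Heps.
set r := Rmin dl delta0; have Hr : 0 < r by apply: Rmin_pos.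
have Hrdl : r <= dl := Rmin_l dl delta0; have Hrd0 : r <= delta0 := Rmin_r dl delta0.
set t := r / (2 * (vnorm v + 1)).
have Ht : 0 < t by apply: Rdiv_lt_0_compat; lra.
have Htv : t * vnorm v < r.
  have : t * (2 * (vnorm v + 1)) = r by rewrite /t; field; lra.
  nra.
set w := vadd y (vscale t v).
have Hu : vsub w y = vscale t v by rewrite /w; vext.
have Hnu : vnorm (vsub w y) = t * vnorm v by rewrite Hu vnorm_scale Rabs_right; lra.
have := Hw w ltac:(lra).
rewrite Hconst; last lra.
rewrite Hu (lin_scale HlinL) (_ : vsub (vsub (H y) (H y)) (vscale t (L v))
                                  = vscale (- t) (L v)); last by vext.
rewrite vnorm_scale Rabs_Ropp Rabs_right -?Hu ?Hnu; last lra.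
move=> h; apply: (Rmult_le_reg_l t) => //; nra.
Qed.

(* Uniqueness of derivatives: maps differing by integer vectors (i.e. equal as
   maps into the torus) have the same linear derivative. *)
Lemma frL_unique H1 H2 y L1 L2 : (forall w, int_vec (vsub (H1 w) (H2 w))) ->
  frL H1 y L1 -> frL H2 y L2 -> bndL L1 -> bndL L2 -> lin L1 -> lin L2 ->
  forall v, L1 v = L2 v.
Proof.
move=> Hint F1 F2 B1 B2 Hl1 Hl2 v.
have [dl [Hdl Hloc]] := int_diff_locally_const Hint F1 F2 B1 B2.
have Hlin : lin (fun u => vsub (L1 u) (L2 u)).
  by move=> a b u u'; rewrite Hl1 Hl2; vext.
have E := frL_locally_const Hdl Hloc (frL_sub F1 F2) Hlin v.
apply: functional_extensionality => i.
by have := congr1 (fun f => f i) E; rewrite /vsub /vzero /=; lra.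
Qed.

Lemma frL_comp (F G : vec d -> vec d) y LA LB : frL F y LA -> frL G (F y) LB ->
  bndL LA -> bndL LB -> lin LB -> frL (fun w => G (F w)) y (fun u => LB (LA u)).
Proof.
move=> FA FB [KA [HKA BA]] [KB [HKB BB]] HlB e He.
have HD := dimR_nonneg d; set P := dimR d * (1 + KA).
have HP : 0 <= P by rewrite /P; nra.
set e2 := e / (2 * (dimR d * P + 1)).
have He2 : 0 < e2 by apply: Rdiv_lt_0_compat; nra.
have He2b : dimR d * e2 * P <= e / 2.
  have : e2 * (2 * (dimR d * P + 1)) = e by rewrite /e2; field; nra.
  nra.
set e1 := Rmin 1 (e / (2 * (dimR d * KB + 1))).
have He1 : 0 < e1 by apply: Rmin_pos; [lra | apply: Rdiv_lt_0_compat; nra].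
have He1a : e1 <= 1 by apply: Rmin_l.
have He1b : dimR d * KB * e1 <= e / 2.
  have h : e1 <= e / (2 * (dimR d * KB + 1)) by apply: Rmin_r.
  have : e / (2 * (dimR d * KB + 1)) * (2 * (dimR d * KB + 1)) = e by field; nra.
  nra.
have [d1 [Hd1 G1]] := FA e1 He1; have [d2 [Hd2 G2]] := FB e2 He2.
exists (Rmin d1 (d2 / (P + 1))); split; first by apply: Rmin_pos => //; apply: Rdiv_lt_0_compat; lra.
move=> w Hw; have g1 := G1 w ltac:(have := Rmin_l d1 (d2 / (P + 1)); lra).
have Hw2 : vnorm (vsub w y) * (P + 1) < d2.
  have Ee : d2 / (P + 1) * (P + 1) = d2 by field; lra.
  have Hlt := Rlt_le_trans _ _ _ Hw (Rmin_r d1 (d2 / (P + 1))).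
  by have := Rmult_lt_compat_r (P + 1) _ _ ltac:(lra) Hlt; rewrite Ee.
set u := vsub w y in g1 Hw2 *; set h := vsub (F w) (F y) in g1 *.
have Hu := vnorm_nonneg u.
have Hh : vnorm h <= P * vnorm u.
  rewrite (_ : h = vadd (vsub h (LA u)) (LA u)); last by vext.
  apply: Rle_trans (vnorm_add _ _) _; rewrite /P Rmult_assoc.
  by apply: Rmult_le_compat_l => //; have := BA u; nra.
have g2 := G2 (F w) ltac:(change (vnorm h < d2); nra); rewrite -/h in g2.
rewrite (_ : vsub (vsub (G (F w)) (G (F y))) (LB (LA u)) =
             vadd (vsub (vsub (G (F w)) (G (F y))) (LB h)) (LB (vsub h (LA u))));
  last by rewrite (lin_sub HlB); vext.
apply: Rle_trans (vnorm_add _ _) _.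
have g3 := BB (vsub h (LA u)).
have : vnorm (vsub (vsub (G (F w)) (G (F y))) (LB h)) + vnorm (LB (vsub h (LA u)))
       <= e2 * (P * vnorm u) + KB * (e1 * vnorm u).
  by have := vnorm_nonneg h; have := vnorm_nonneg (vsub h (LA u)); nra.
by move=> hh; have := Rmult_le_compat_l _ _ _ HD hh; nra.
Qed.

Lemma frL_id (y : vec d) : frL (fun w => w) y (fun u => u).
Proof.
move=> e He; exists 1; split => [|w _]; first lra.
rewrite (_ : vsub (vsub w y) (vsub w y) = vscale 0 w); last by vext.
by rewrite vnorm_scale Rabs_R0; have := vnorm_nonneg (vsub w y); nra.
Qed.
End Derivative.

Section TorusOrbit.
Variable d : nat.
Variables (F G : vec d -> vec d) (DF DG : vec d -> mat d) (x : vec d).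

Lemma torbit_pos n : torbit F G x (Z.of_nat n) = iter n F x.
Proof. by case: n => [|n] //=; rewrite SuccNat2Pos.id_succ. Qed.

Lemma torbit_neg n : torbit F G x (- Z.of_nat n) = iter n G x.
Proof. by case: n => [|n] //=; rewrite SuccNat2Pos.id_succ. Qed.

Lemma torbit_succ k : (0 <= k)%Z -> torbit F G x (k + 1) = F (torbit F G x k).
Proof.
move=> Hk; have [n ->] : exists n, k = Z.of_nat n by exists (Z.to_nat k); lia.
by rewrite (_ : (Z.of_nat n + 1 = Z.of_nat n.+1)%Z) ?torbit_pos //; lia.
Qed.

Lemma torbit_pred k : (k < 0)%Z -> torbit F G x k = G (torbit F G x (k + 1)).
Proof.
move=> Hk; have [n ->] : exists n, k = (- Z.of_nat n.+1)%Z by exists (Z.to_nat (- k - 1)); lia.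
by rewrite (_ : (- Z.of_nat n.+1 + 1 = - Z.of_nat n)%Z) ?torbit_neg //; lia.
Qed.

Hypothesis HT : torus_C1_diffeo F DF G DG.

(* Chain rule for G ∘ F ≡ id (mod Z^d): DG(F y) DF(y) = id. *)
Lemma DG_DF_id y v : mapply (DG (F y)) (mapply (DF y) v) = v.
Proof.
case: HT => [[HF _] [[HG _] [_ [_ [HGF _]]]]].
apply: (frL_unique (H1 := fun w => G (F w)) (H2 := fun w => w) (y := y)
  (L1 := fun u => mapply (DG (F y)) (mapply (DF y) u)) (L2 := fun u => u)).
- by move=> w; exact: HGF.
- by apply: frL_comp; [exact: HF | exact: HG | exact: bndL_mapply | exact: bndL_mapply |
     exact: lin_mapply].
- exact: frL_id.
- by apply: bndL_comp; exact: bndL_mapply.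
- by exists 1; split => [|v']; lra.
- by apply: lin_comp; exact: lin_mapply.
- by [].
Qed.

Lemma DG_periodic y z v : int_vec z -> mapply (DG (vadd y z)) v = mapply (DG y) v.
Proof.
case: HT => [_ [[HG _] [_ [HGt _]]]] Hz.
apply: (frL_unique (H1 := fun w => G (vadd w z)) (H2 := G) (y := y)
  (L1 := mapply (DG (vadd y z))) (L2 := mapply (DG y))).
- move=> w; apply: HGt; rewrite /teq.
  by rewrite (_ : vsub (vadd w z) w = z) //; vext.
- move=> e He; have [dl [Hdl H]] := HG (vadd y z) e He; exists dl; split => // w Hw.
  have E : vsub (vadd w z) (vadd y z) = vsub w y by vext.
  by have := H (vadd w z); rewrite E; apply.
- exact: HG.
- exact: bndL_mapply.
- exact: bndL_mapply.
- exact: lin_mapply.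
- exact: lin_mapply.
Qed.

Lemma torbit_DG_DF k w :
  mapply (DG (torbit F G x (k + 1))) (mapply (DF (torbit F G x k)) w) = w.
Proof.
case: (Z_lt_le_dec k 0) => Hk; last by rewrite (torbit_succ Hk); exact: DG_DF_id.
rewrite (torbit_pred Hk); set y := torbit F G x (k + 1).
case: HT => [_ [_ [_ [_ [_ HFG]]]]].
(* for negative k, x_{k+1} and F (G x_{k+1}) differ by an integer vector *)
set z := vsub (F (G y)) y; have Hz : int_vec z := HFG y.
rewrite -(DG_periodic y _ Hz) (_ : vadd y z = F (G y)); first exact: DG_DF_id.
by rewrite /z; vext.
Qed.
End TorusOrbit.

Section Projections.
Variable d : nat.
Variables (DF : vec d -> mat d) (orb : Z -> vec d) (Es Eu : Z -> vec d -> Prop).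
Hypothesis Hsp : forall k, splitting (Es k) (Eu k).
Hypothesis HinvS : forall k v, Es (k + 1)%Z v <-> exists w, Es k w /\ v = mapply (DF (orb k)) w.
Hypothesis HinvU : forall k v, Eu (k + 1)%Z v <-> exists w, Eu k w /\ v = mapply (DF (orb k)) w.

Local Notation A k := (mapply (DF (orb k))).

Lemma subspace_sub (E : vec d -> Prop) : is_subspace E -> forall u v, E u -> E v -> E (vsub u v).
Proof.
move=> [_ [Ha Hs]] u v Hu Hv; rewrite (_ : vsub u v = vadd u (vscale (-1) v)); last by vext.
by apply: Ha => //; exact: Hs.
Qed.

Lemma subspace_lc (E : vec d -> Prop) : is_subspace E -> forall a b u v, E u -> E v ->
  E (vadd (vscale a u) (vscale b v)).
Proof. by move=> [_ [Ha Hs]] a b u v Hu Hv; apply: Ha; exact: Hs. Qed.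

Lemma proj_ex k v : exists s, Es k s /\ Eu k (vsub v s).
Proof.
have [_ [_ [_ H]]] := Hsp k; have [s [u [Hs [Hu ->]]]] := H v.
by exists s; split => //; rewrite (_ : vsub (vadd s u) s = u) //; vext.
Qed.

Definition pS k v : vec d := proj1_sig (constructive_indefinite_description _ (proj_ex k v)).
Definition pU k v : vec d := vsub v (pS k v).

Lemma pS_spec k v : Es k (pS k v) /\ Eu k (pU k v).
Proof. exact: proj2_sig (constructive_indefinite_description _ (proj_ex k v)). Qed.

(* The decomposition is unique since the sum is direct. *)
Lemma pS_char k v s : Es k s -> Eu k (vsub v s) -> pS k v = s.
Proof.
move=> Hs Hu; have [H1 H2] := pS_spec k v; have [SS [SU [Hi _]]] := Hsp k.
have E : vsub (pS k v) s = @vzero d.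
  apply: Hi; first exact: subspace_sub.
  rewrite (_ : vsub (pS k v) s = vsub (vsub v s) (pU k v)); last by rewrite /pU; vext.
  exact: subspace_sub.
apply: functional_extensionality => i.
by have := congr1 (fun f => f i) E; rewrite /vsub /vzero /=; lra.
Qed.

Lemma pS_lin k : lin (pS k).
Proof.
move=> a b u v; have [SS [SU _]] := Hsp k; apply: pS_char.
  by apply: subspace_lc => //; apply pS_spec.
rewrite (_ : vsub (vadd (vscale a u) (vscale b v)) (vadd (vscale a (pS k u)) (vscale b (pS k v)))
           = vadd (vscale a (pU k u)) (vscale b (pU k v))); last by rewrite /pU; vext.
by apply: subspace_lc => //; apply pS_spec.
Qed.

Lemma pU_lin k : lin (pU k).
Proof. by move=> a b u v; rewrite /pU pS_lin; vext. Qed.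

Lemma A_Es k w : Es (k - 1)%Z w -> Es k (A (k - 1)%Z w).
Proof.
move=> H; have := (HinvS (k - 1) (A (k - 1)%Z w)).2.
by rewrite (_ : (k - 1 + 1 = k)%Z); [apply; exists w | lia].
Qed.

Lemma A_Eu k w : Eu (k - 1)%Z w -> Eu k (A (k - 1)%Z w).
Proof.
move=> H; have := (HinvU (k - 1) (A (k - 1)%Z w)).2.
by rewrite (_ : (k - 1 + 1 = k)%Z); [apply; exists w | lia].
Qed.

(* π^s and π^u commute with the dynamics, hence with Γ. *)
Lemma pS_Gamma k v w :
  pS k (vsub v (A (k - 1)%Z w)) = vsub (pS k v) (A (k - 1)%Z (pS (k - 1) w)).
Proof.
have [SS [SU _]] := Hsp k; apply: pS_char.
  by apply: subspace_sub => //; [apply pS_spec | apply: A_Es; apply pS_spec].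
rewrite (_ : vsub (vsub v (A (k - 1)%Z w)) (vsub (pS k v) (A (k - 1)%Z (pS (k - 1) w)))
           = vsub (pU k v) (A (k - 1)%Z (pU (k - 1) w))); last by rewrite /pU (lin_sub (lin_mapply _)); vext.
by apply: subspace_sub => //; [apply pS_spec | apply: A_Eu; apply pS_spec].
Qed.

Lemma pU_Gamma k v w :
  pU k (vsub v (A (k - 1)%Z w)) = vsub (pU k v) (A (k - 1)%Z (pU (k - 1) w)).
Proof. by rewrite /pU pS_Gamma [in RHS](lin_sub (lin_mapply _)); vext. Qed.
End Projections.

Section Upsilon.
Variable d : nat.
Variables (DF DG : vec d -> mat d) (orb : Z -> vec d) (Es Eu : Z -> vec d -> Prop).
Hypothesis Hsp : forall k, splitting (Es k) (Eu k).
Hypothesis HinvS : forall k v, Es (k + 1)%Z v <-> exists w, Es k w /\ v = mapply (DF (orb k)) w.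
Hypothesis HinvU : forall k v, Eu (k + 1)%Z v <-> exists w, Eu k w /\ v = mapply (DF (orb k)) w.
Hypothesis HBA : forall k w, mapply (DG (orb (k + 1)%Z)) (mapply (DF (orb k)) w) = w.

Local Notation A k := (mapply (DF (orb k))).
Local Notation B k := (mapply (DG (orb k))).
Local Notation πs := (pS Hsp).
Local Notation πu := (pU Hsp).

Lemma dfpow_lin k j : lin (dfpow DF orb k j).
Proof. by elim: j => [|j IH] //=; apply: lin_comp => //; exact: lin_mapply. Qed.

Lemma dfneg_lin k j : lin (dfneg DG orb k j).
Proof. by elim: j => [|j IH] //=; apply: lin_comp => //; exact: lin_mapply. Qed.

Lemma dfpow_shift k j v : dfpow DF orb k j.+1 v = dfpow DF orb (k + 1) j (A k v).
Proof.
elim: j => [|j IH]; first by rewrite /= Z.add_0_r.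
change (A (k + Z.of_nat j.+1)%Z (dfpow DF orb k j.+1 v)
        = A (k + 1 + Z.of_nat j)%Z (dfpow DF orb (k + 1) j (A k v))).
by rewrite IH (_ : (k + Z.of_nat j.+1 = k + 1 + Z.of_nat j)%Z) //; lia.
Qed.

Lemma dfneg_shift k j v : dfneg DG orb k j.+1 v = dfneg DG orb (k - 1) j (B k v).
Proof.
elim: j => [|j IH]; first by rewrite /= Z.sub_0_r.
change (B (k - Z.of_nat j.+1)%Z (dfneg DG orb k j.+1 v)
        = B (k - 1 - Z.of_nat j)%Z (dfneg DG orb (k - 1) j (B k v))).
by rewrite IH (_ : (k - Z.of_nat j.+1 = k - 1 - Z.of_nat j)%Z) //; lia.
Qed.

Lemma Eu_B l w : Eu l w -> Eu (l - 1)%Z (B l w) /\ A (l - 1)%Z (B l w) = w.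
Proof.
move=> H; have := (HinvU (l - 1) w).1; rewrite (_ : (l - 1 + 1 = l)%Z); last lia.
move=> /(_ H) [w' [Hw' ->]]; have := HBA (l - 1) w'.
by rewrite (_ : (l - 1 + 1 = l)%Z) //; [move=> -> | lia].
Qed.

Lemma dfneg_Eu l j w : Eu l w -> Eu (l - Z.of_nat j)%Z (dfneg DG orb l j w).
Proof.
move=> H; elim: j => [|j IH]; first by rewrite /= Z.sub_0_r.
have := (Eu_B IH).1; rewrite /= (_ : (l - Z.of_nat j - 1 = l - Z.of_nat j.+1)%Z) //; lia.
Qed.

Definition sterm (eta : seqv d) k j : vec d :=
  dfpow DF orb (k - Z.of_nat j) j (πs (k - Z.of_nat j) (eta (k - Z.of_nat j)%Z)).
Definition uterm (eta : seqv d) k j : vec d :=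
  dfneg DG orb (k + Z.of_nat j) j (πu (k + Z.of_nat j) (eta (k + Z.of_nat j)%Z)).

Definition Upsilon (eta : seqv d) : seqv d := fun k i =>
  Series (fun j => sterm eta k j i) - Series (fun j => uterm eta k j.+1 i).

Definition Ups_conv (eta : seqv d) : Prop := forall k i,
  ex_series (fun j => sterm eta k j i) /\ ex_series (fun j => uterm eta k j i).

Lemma sterm0 eta k : sterm eta k 0 = πs k (eta k).
Proof. by rewrite /sterm /= Z.sub_0_r. Qed.

Lemma uterm0 eta k : uterm eta k 0 = πu k (eta k).
Proof. by rewrite /uterm /= Z.add_0_r. Qed.

Lemma Ups_conv_u1 eta k i : Ups_conv eta -> ex_series (fun j => uterm eta k j.+1 i).
Proof. by move=> H; exact: (ex_series_incr_1 (fun j => uterm eta k j i)).1 (H k i).2. Qed.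

Lemma Upsilon_lin eta eta' a b : Ups_conv eta -> Ups_conv eta' -> forall k i,
  Upsilon (fun k => vadd (vscale a (eta k)) (vscale b (eta' k))) k i
  = a * Upsilon eta k i + b * Upsilon eta' k i.
Proof.
move=> H1 H2 k i; rewrite /Upsilon.
rewrite (Series_ext _ (fun j => a * sterm eta k j i + b * sterm eta' k j i)); last first.
  by move=> j; rewrite /sterm pS_lin dfpow_lin.
rewrite (Series_ext (fun j => uterm _ k j.+1 i)
                    (fun j => a * uterm eta k j.+1 i + b * uterm eta' k j.+1 i)); last first.
  by move=> j; rewrite /uterm pU_lin dfneg_lin.
have [Hs1 _] := H1 k i; have [Hs2 _] := H2 k i.
have Hu1 := Ups_conv_u1 k i H1; have Hu2 := Ups_conv_u1 k i H2.
rewrite !Series_plus ?Series_scal_l; try ring; exact: ex_seriesR_scal.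
Qed.

Lemma sterm_Gamma eta k j :
  sterm (GammaOp DF orb eta) k j = vsub (sterm eta k j) (sterm eta k j.+1).
Proof.
rewrite /sterm /GammaOp (pS_Gamma Hsp HinvS HinvU) (lin_sub (dfpow_lin _ _)).
rewrite (_ : (k - Z.of_nat j.+1 = k - Z.of_nat j - 1)%Z); last lia.
by rewrite dfpow_shift (_ : (k - Z.of_nat j - 1 + 1 = k - Z.of_nat j)%Z) //; lia.
Qed.

Lemma uterm_Gamma eta k j :
  uterm (GammaOp DF orb eta) k j.+1 = vsub (uterm eta k j.+1) (uterm eta k j).
Proof.
rewrite /uterm /GammaOp (pU_Gamma Hsp HinvS HinvU) (lin_sub (dfneg_lin _ _)).
rewrite (dfneg_shift (k + Z.of_nat j.+1) j (A _ _)).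
have := HBA (k + Z.of_nat j.+1 - 1).
rewrite (_ : (k + Z.of_nat j.+1 - 1 + 1 = k + Z.of_nat j.+1)%Z); last lia.
by move=> ->; rewrite (_ : (k + Z.of_nat j.+1 - 1 = k + Z.of_nat j)%Z) //; lia.
Qed.

(* ΥΓη = η: both series telescope. *)
Lemma Upsilon_Gamma eta : Ups_conv eta -> forall k i, Upsilon (GammaOp DF orb eta) k i = eta k i.
Proof.
move=> H k i; have [Hs Hu] := H k i; have Hu1 := Ups_conv_u1 k i H.
have Hs1 := (ex_series_incr_1 (fun j => sterm eta k j i)).1 Hs.
rewrite /Upsilon.
rewrite (Series_ext _ (fun j => sterm eta k j i - sterm eta k j.+1 i)); last first.
  by move=> j; rewrite sterm_Gamma.
rewrite (Series_ext (fun j => uterm _ k j.+1 i) (fun j => uterm eta k j.+1 i - uterm eta k j i));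
  last by move=> j; rewrite uterm_Gamma.
rewrite !Series_minus // (Series_incr_1 _ Hs) (Series_incr_1 _ Hu) sterm0 uterm0 /pU /vsub.
ring.
Qed.

Lemma mapply_series (M : mat d) (f : nat -> vec d) i : (forall l, ex_series (fun j => f j l)) ->
  mapply M (fun l => Series (fun j => f j l)) i = Series (fun j => mapply M (f j) i).
Proof.
move=> H; rewrite /mapply !rsumE.
have Hg : forall l, ex_series (fun j => M i l * f j l) by move=> l; apply: ex_seriesR_scal.
rewrite (lsum_series _ Hg).2.
by apply: lsum_ext => l; rewrite Series_scal_l.
Qed.

Lemma A_sterm eta k j : A (k - 1)%Z (sterm eta (k - 1) j) = sterm eta k j.+1.
Proof.
rewrite /sterm /= (_ : (k - Z.of_nat j.+1 = k - 1 - Z.of_nat j)%Z); last lia.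
by rewrite (_ : (k - 1 - Z.of_nat j + Z.of_nat j = k - 1)%Z) //; lia.
Qed.

Lemma A_uterm eta k j : A (k - 1)%Z (uterm eta (k - 1) j.+1) = uterm eta k j.
Proof.
rewrite /uterm /= (_ : (k - 1 + Z.of_nat j.+1 = k + Z.of_nat j)%Z); last lia.
rewrite (_ : (k + Z.of_nat j - Z.of_nat j = k)%Z); last lia.
set l := (k + Z.of_nat j)%Z.
have := dfneg_Eu j (pS_spec Hsp l (eta l)).2; rewrite (_ : (l - Z.of_nat j = k)%Z); last lia.
by move=> /Eu_B [].
Qed.

(* ΓΥη = η: A_{k-1} maps the series at k-1 onto the tails of those at k. *)
Lemma Gamma_Upsilon eta : Ups_conv eta -> forall k i, GammaOp DF orb (Upsilon eta) k i = eta k i.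
Proof.
move=> H k i; rewrite /GammaOp /vsub.
have -> : Upsilon eta (k - 1)%Z = vsub (fun l => Series (fun j => sterm eta (k - 1) j l))
                                       (fun l => Series (fun j => uterm eta (k - 1) j.+1 l)).
  by apply: functional_extensionality.
rewrite (lin_sub (lin_mapply _)) /vsub.
have Hs' l : ex_series (fun j => sterm eta (k - 1) j l) := (H _ l).1.
have Hu' l : ex_series (fun j => uterm eta (k - 1) j.+1 l) := Ups_conv_u1 _ l H.
rewrite !mapply_series //.
rewrite (Series_ext _ (fun j => sterm eta k j.+1 i)); last by move=> j; rewrite A_sterm.
rewrite (Series_ext (fun j => mapply _ (uterm _ _ _) i) (fun j => uterm eta k j i));
  last by move=> j; rewrite A_uterm.
have [Hs Hu] := H k i.
by rewrite /Upsilon (Series_incr_1 _ Hs) (Series_incr_1 _ Hu) sterm0 uterm0 /pU /vsub; ring.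
Qed.
End Upsilon.

Lemma exp_le x y : x <= y -> exp x <= exp y.
Proof. by case/Rle_lt_or_eq_dec => [H | ->]; [left; exact: exp_increasing | right]. Qed.

Lemma exp_nat a j : exp (a * INR j) = exp a ^ j.
Proof.
elim: j => [|j IH]; first by rewrite /= Rmult_0_r exp_0.
by rewrite S_INR Rmult_plus_distr_l exp_plus IH Rmult_1_r /=; ring.
Qed.

Lemma abs_minus_nat k j : Rabs (IZR (k - Z.of_nat j)) <= Rabs (IZR k) + INR j.
Proof.
rewrite minus_IZR INR_IZR_INZ; have := Rabs_triang (IZR k) (- IZR (Z.of_nat j)).
rewrite Rabs_Ropp (Rabs_right (IZR (Z.of_nat j))); first by rewrite /Rminus; lra.
by rewrite -INR_IZR_INZ; apply: Rle_ge; exact: pos_INR.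
Qed.

Lemma abs_plus_nat k j : Rabs (IZR (k + Z.of_nat j)) <= Rabs (IZR k) + INR j.
Proof.
rewrite plus_IZR INR_IZR_INZ; have := Rabs_triang (IZR k) (IZR (Z.of_nat j)).
rewrite (Rabs_right (IZR (Z.of_nat j))); first lra.
by rewrite -INR_IZR_INZ; apply: Rle_ge; exact: pos_INR.
Qed.

Lemma exp_weight_le (x v C : R) : exp (- x) * v <= C <-> v <= C * exp x.
Proof.
have E : exp (- x) * exp x = 1 by rewrite -exp_plus Rplus_opp_l exp_0.
have Hx := exp_pos x; have Hx' := exp_pos (- x).
split => H.
- have := Rmult_le_compat_r (exp x) _ _ (Rlt_le _ _ Hx) H.
  have -> : exp (- x) * v * exp x = v * (exp (- x) * exp x) by ring.
  by rewrite E; lra.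
- have := Rmult_le_compat_l _ _ _ (Rlt_le _ _ Hx') H.
  have -> : exp (- x) * (C * exp x) = C * (exp (- x) * exp x) by ring.
  by rewrite E; lra.
Qed.

Section WeightedNorms.
Variables (d n : nat).

Lemma weight_eq (k : Z) : - Rabs (IZR k) / INR n = - (/ INR n * Rabs (IZR k)).
Proof. by rewrite /Rdiv; ring. Qed.

Lemma inX_bnd (eta : seqv d) : inX n eta -> exists C, 0 <= C /\
  forall k, vnorm (eta k) <= C * exp (/ INR n * Rabs (IZR k)).
Proof.
move=> [C HC]; exists C; split.
- by have := HC 0%Z; have := exp_pos (- Rabs (IZR 0) / INR n);
     have := vnorm_nonneg (eta 0%Z); nra.
- by move=> k; apply/exp_weight_le; rewrite -weight_eq; exact: HC.
Qed.

Lemma bnd_inX (eta : seqv d) C :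
  (forall k, vnorm (eta k) <= C * exp (/ INR n * Rabs (IZR k))) -> inX n eta.
Proof. by move=> H; exists C => k; rewrite weight_eq; apply/exp_weight_le. Qed.

Lemma inX_sub (eta eta' : seqv d) :
  inX n eta -> inX n eta' -> inX n (fun k => vsub (eta' k) (eta k)).
Proof.
move=> /inX_bnd [C1 [HC1 H1]] /inX_bnd [C2 [HC2 H2]].
apply: (bnd_inX (C := dimR d * (C2 + C1))) => k; apply: Rle_trans (vnorm_sub _ _) _.
have := Rmult_le_compat_l _ _ _ (dimR_nonneg d) (Rplus_le_compat _ _ _ _ (H2 k) (H1 k)).
lra.
Qed.

(* On X_n the supremum defining ||η||_n exists (completeness of R). *)
Lemma wnorm_lub (eta : seqv d) : inX n eta -> is_lub (wset n eta) (wnorm n eta).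
Proof.
move=> [C HC]; rewrite /wnorm; apply: epsilon_spec.
have Hb : bound (wset n eta) by exists C => r [k ->]; exact: HC.
have Hne : exists r, wset n eta r.
  by exists (exp (- Rabs (IZR 0) / INR n) * vnorm (eta 0%Z)); exists 0%Z.
by have [s Hs] := completeness _ Hb Hne; exists s.
Qed.

Lemma wnorm_ub (eta : seqv d) : inX n eta -> forall k,
  vnorm (eta k) <= wnorm n eta * exp (/ INR n * Rabs (IZR k)).
Proof.
move=> H k; apply/exp_weight_le; rewrite -weight_eq.
by apply: (proj1 (wnorm_lub H)); exists k.
Qed.

Lemma wnorm_nonneg (eta : seqv d) : inX n eta -> 0 <= wnorm n eta.
Proof.
move=> H; have := wnorm_ub H 0%Z; have := vnorm_nonneg (eta 0%Z).
by have := exp_pos (/ INR n * Rabs (IZR 0)); nra.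
Qed.

Lemma wnorm_least (eta : seqv d) M :
  (forall k, vnorm (eta k) <= M * exp (/ INR n * Rabs (IZR k))) -> wnorm n eta <= M.
Proof.
move=> HM; apply: (proj2 (wnorm_lub (bnd_inX HM))) => r [k ->].
by rewrite weight_eq; apply/exp_weight_le.
Qed.

Lemma growth_inX (u : seqv d) a M : 0 <= a <= / INR n ->
  (forall k, vnorm (u k) <= M * exp (a * Rabs (IZR k))) -> inX n u /\ wnorm n u <= M.
Proof.
move=> Ha H.
have HM : 0 <= M.
  by have := H 0%Z; have := vnorm_nonneg (u 0%Z); have := exp_pos (a * Rabs (IZR 0)); nra.
suff Hu : forall k, vnorm (u k) <= M * exp (/ INR n * Rabs (IZR k)).
  by split; [exact: bnd_inX Hu | exact: wnorm_least].
move=> k; apply: Rle_trans (H k) _; apply: Rmult_le_compat_l => //.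
by apply: exp_le; have := Rabs_pos (IZR k); nra.
Qed.
End WeightedNorms.

Lemma geometric_series_bnd d (f : nat -> vec d) M q : 0 <= q < 1 ->
  (forall j, vnorm (f j) <= M * q ^ j) ->
  forall i, ex_series (fun j => f j i) /\ Rabs (Series (fun j => f j i)) <= M / (1 - q).
Proof.
move=> Hq Hf i; have Hg := ex_series_geom_scal M Hq.
have Hb1 j : Rabs (f j i) <= M * q ^ j by apply: Rle_trans (vnorm_comp _ i) (Hf j).
split; first exact: ex_seriesR_le Hb1 Hg.
have Ha : ex_series (fun j => Rabs (f j i)).
  by apply: (ex_seriesR_le (b := fun j => M * q ^ j)) => // j; rewrite Rabs_Rabsolu.
apply: Rle_trans (Series_Rabs _ Ha) _.
apply: Rle_trans (Series_le _ _ _ Hg) _; first by move=> j; split; [exact: Rabs_pos | exact: Hb1].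
by rewrite Series_scal_l Series_geom; [right; rewrite /Rdiv; ring | rewrite Rabs_right; lra].
Qed.

Definition hyp_bounds d (DF DG : vec d -> mat d) (orb : Z -> vec d)
    (Es Eu : Z -> vec d -> Prop) (lam eps c : R) : Prop :=
  (forall (k : Z) (j : nat), (0 < j)%nat -> forall v, Es k v ->
     vnorm (dfpow DF orb k j v) <= c * lam ^ j * exp (eps * Rabs (IZR k)) * vnorm v) /\
  (forall (k : Z) (j : nat), (0 < j)%nat -> forall v, Eu k v ->
     vnorm (dfneg DG orb k j v) <= c * lam ^ j * exp (eps * Rabs (IZR k)) * vnorm v) /\
  (forall (k : Z) v s u, Es k s -> Eu k u -> v = vadd s u ->
     vnorm s <= c * exp (eps * Rabs (IZR k)) * vnorm v /\
     vnorm u <= c * exp (eps * Rabs (IZR k)) * vnorm v).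

(* The estimates persist when the constant is enlarged, so we may take c ≥ 1. *)
Lemma hyp_bounds_mono d DF DG orb Es Eu lam eps c c' : 0 <= lam -> c <= c' ->
  @hyp_bounds d DF DG orb Es Eu lam eps c -> hyp_bounds DF DG orb Es Eu lam eps c'.
Proof.
move=> Hlam Hcc [HS [HU HD]].
have Hmon j k (v : vec d) : c * lam ^ j * exp (eps * Rabs (IZR k)) * vnorm v
                  <= c' * lam ^ j * exp (eps * Rabs (IZR k)) * vnorm v.
  have := pow_le _ j Hlam; have := exp_pos (eps * Rabs (IZR k)); have := vnorm_nonneg v.
  move=> h1 h2 h3; apply: Rmult_le_compat_r => //; apply: Rmult_le_compat_r; [lra|].
  by apply: Rmult_le_compat_r.
split; [|split].
- by move=> k j Hj v Hv; apply: Rle_trans (HS k j Hj v Hv) (Hmon _ _ _).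
- by move=> k j Hj v Hv; apply: Rle_trans (HU k j Hj v Hv) (Hmon _ _ _).
- move=> k v s u Hs Hu Hv; have [h1 h2] := HD k v s u Hs Hu Hv.
  by have := Hmon 0%nat k v; rewrite /= !Rmult_1_r; lra.
Qed.

Section Estimates.
Variable d : nat.
Variables (DF DG : vec d -> mat d) (orb : Z -> vec d) (Es Eu : Z -> vec d -> Prop).
Hypothesis Hsp : forall k, splitting (Es k) (Eu k).
Variables (lam eps c a b : R).
Hypotheses (Hlam : 0 <= lam) (Hc : 1 <= c) (Heps : 0 <= eps) (Hb : 0 <= b)
  (Hab : 2 * eps + b <= a) (Hq : lam * exp a < 1).
Hypothesis Hhyp : hyp_bounds DF DG orb Es Eu lam eps c.

Local Notation πs := (pS Hsp).
Local Notation πu := (pU Hsp).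

(* ratio of the geometric series dominating the terms *)
Definition qq : R := lam * exp a.

Definition Kups : R := 2 * c ^ 2 / (1 - qq) * dimR d.

Lemma qq_range : 0 <= qq < 1.
Proof. by rewrite /qq; have := exp_pos a; split; nra. Qed.

Lemma Kups_nonneg : 0 <= Kups.
Proof.
have := qq_range => Hqq; rewrite /Kups; apply: Rmult_le_pos; last exact: dimR_nonneg.
by apply: Rmult_le_pos; [nra | left; apply: Rinv_0_lt_compat; lra].
Qed.

Lemma pS_bnd k v : vnorm (πs k v) <= c * exp (eps * Rabs (IZR k)) * vnorm v.
Proof.
have [_ [_ HD]] := Hhyp; have [H1 H2] := pS_spec Hsp k v.
by apply: (proj1 (HD k v _ _ H1 H2 _)); rewrite /pU; vext.
Qed.

Lemma pU_bnd k v : vnorm (πu k v) <= c * exp (eps * Rabs (IZR k)) * vnorm v.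
Proof.
have [_ [_ HD]] := Hhyp; have [H1 H2] := pS_spec Hsp k v.
by apply: (proj2 (HD k v _ _ H1 H2 _)); rewrite /pU; vext.
Qed.

(* The hyperbolicity estimate also holds trivially for j = 0, since c e^{ε|l|} ≥ 1. *)
Lemma trivial_bnd L (s : vec d) : 0 <= L -> vnorm s <= c * lam ^ 0 * exp (eps * L) * vnorm s.
Proof.
move=> HL; have HE : 1 <= exp (eps * L) by rewrite -exp_0; apply: exp_le; nra.
have HcE : 1 <= c * exp (eps * L) by nra.
by have := vnorm_nonneg s; rewrite /= Rmult_1_r; nra.
Qed.

Lemma rate_bnd L K j : 0 <= L -> 0 <= K -> L <= K + INR j ->
  exp (eps * L) * (exp (eps * L) * exp (b * L)) <= exp (a * K) * exp a ^ j.
Proof.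
move=> HL HK HLK; rewrite -!exp_plus -exp_nat -exp_plus; apply: exp_le.
by have := pos_INR j; nra.
Qed.

Lemma term_bnd (w s v : vec d) L K j C :
  0 <= L -> 0 <= K -> L <= K + INR j -> 0 <= C ->
  vnorm w <= c * lam ^ j * exp (eps * L) * vnorm s ->
  vnorm s <= c * exp (eps * L) * vnorm v ->
  vnorm v <= C * exp (b * L) ->
  vnorm w <= c ^ 2 * C * exp (a * K) * qq ^ j.
Proof.
move=> HL HK HLK HC H1 H2 H3.
have Hlj : 0 <= lam ^ j by apply: pow_le.
have E1 := exp_pos (eps * L); have E2 := exp_pos (b * L).
have Hs : vnorm s <= c * exp (eps * L) * (C * exp (b * L)).
  by apply: Rle_trans H2 _; apply: Rmult_le_compat_l => //; nra.
have Hw : vnorm w <= c * lam ^ j * exp (eps * L) * (c * exp (eps * L) * (C * exp (b * L))).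
  by apply: Rle_trans H1 _; apply: Rmult_le_compat_l => //; apply: Rmult_le_pos; nra.
apply: Rle_trans Hw _; rewrite /qq Rpow_mult_distr.
rewrite (_ : c * lam ^ j * exp (eps * L) * (c * exp (eps * L) * (C * exp (b * L)))
           = (c ^ 2 * C * lam ^ j) * (exp (eps * L) * (exp (eps * L) * exp (b * L)))); last ring.
rewrite (_ : c ^ 2 * C * exp (a * K) * (lam ^ j * exp a ^ j)
           = (c ^ 2 * C * lam ^ j) * (exp (a * K) * exp a ^ j)); last ring.
apply: Rmult_le_compat_l; last exact: rate_bnd.
by apply: Rmult_le_pos => //; nra.
Qed.

Variables (eta : seqv d) (C : R).
Hypotheses (HC : 0 <= C) (Heta : forall k, vnorm (eta k) <= C * exp (b * Rabs (IZR k))).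

Lemma sterm_bnd k j : vnorm (sterm DF orb Hsp eta k j) <= c ^ 2 * C * exp (a * Rabs (IZR k)) * qq ^ j.
Proof.
have [HS _] := Hhyp; set l := (k - Z.of_nat j)%Z.
apply: (term_bnd (s := πs l (eta l)) (v := eta l) (L := Rabs (IZR l))) => //;
  [exact: Rabs_pos | exact: Rabs_pos | exact: abs_minus_nat | | exact: pS_bnd].
case: j @l => [|j] l; first exact: trivial_bnd (Rabs_pos _).
by apply: HS => //; apply pS_spec.
Qed.

Lemma uterm_bnd k j : vnorm (uterm DG orb Hsp eta k j) <= c ^ 2 * C * exp (a * Rabs (IZR k)) * qq ^ j.
Proof.
have [_ [HU _]] := Hhyp; set l := (k + Z.of_nat j)%Z.
apply: (term_bnd (s := πu l (eta l)) (v := eta l) (L := Rabs (IZR l))) => //;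
  [exact: Rabs_pos | exact: Rabs_pos | exact: abs_plus_nat | | exact: pU_bnd].
case: j @l => [|j] l; first exact: trivial_bnd (Rabs_pos _).
by apply: HU => //; apply pS_spec.
Qed.

Lemma Upsilon_bnd : Ups_conv DF DG orb Hsp eta /\
  forall k, vnorm (Upsilon DF DG orb Hsp eta k) <= Kups * C * exp (a * Rabs (IZR k)).
Proof.
have [Hq0 Hq1] := qq_range.
have HM k : 0 <= c ^ 2 * C * exp (a * Rabs (IZR k)).
  by apply: Rmult_le_pos; [apply: Rmult_le_pos; [exact: pow2_ge_0 | exact: HC] | left; exact: exp_pos].
have Hu1 k j : vnorm (uterm DG orb Hsp eta k j.+1) <= c ^ 2 * C * exp (a * Rabs (IZR k)) * qq ^ j.
  apply: Rle_trans (uterm_bnd k j.+1) _; rewrite (_ : qq ^ j.+1 = qq * qq ^ j) //.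
  by have := Rmult_le_pos _ _ (HM k) (pow_le _ j Hq0); nra.
have Bs k := geometric_series_bnd qq_range (sterm_bnd k).
have Bu k := geometric_series_bnd qq_range (uterm_bnd k).
have Bu1 k := geometric_series_bnd qq_range (Hu1 k).
split; first by move=> k i; split; [exact: (Bs k i).1 | exact: (Bu k i).1].
move=> k; rewrite (_ : Kups * C * exp (a * Rabs (IZR k))
                     = 2 * (c ^ 2 * C * exp (a * Rabs (IZR k)) / (1 - qq)) * dimR d);
  last by rewrite /Kups /Rdiv; ring.
apply: vnorm_bnd => i; rewrite /Upsilon.
have := (Bs k i).2; have := (Bu1 k i).2.
have := Rabs_triang (Series (fun j => sterm DF orb Hsp eta k j i))
                    (- Series (fun j => uterm DG orb Hsp eta k j.+1 i)).
by rewrite Rabs_Ropp /Rminus; lra.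
Qed.
End Estimates.

Section BoundedOperator.
Variable d : nat.
Variables (DF DG : vec d -> mat d) (orb : Z -> vec d) (Es Eu : Z -> vec d -> Prop).
Hypothesis Hsp : forall k, splitting (Es k) (Eu k).
Variables (lam eps c a : R) (n m : nat).
Hypotheses (Hlam : 0 <= lam) (Hc : 1 <= c) (Heps : 0 <= eps) (Hn : (0 < n)%nat)
  (Hab : 2 * eps + / INR n <= a) (Ham : a <= / INR m) (Hq : lam * exp a < 1).
Hypothesis Hhyp : hyp_bounds DF DG orb Es Eu lam eps c.

Local Notation U := (Upsilon DF DG orb Hsp).
Local Notation K := (Kups d lam c a).

Lemma Upsilon_X eta : inX n eta ->
  Ups_conv DF DG orb Hsp eta /\ inX m (U eta) /\ wnorm m (U eta) <= K * wnorm n eta.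
Proof.
move=> Heta; have Hb : 0 <= / INR n by left; apply: Rinv_0_lt_compat; apply: lt_0_INR; apply/ltP.
have [Hconv HU] := Upsilon_bnd Hsp Hlam Hc Heps Hb Hab Hq Hhyp
                     (wnorm_nonneg Heta) (wnorm_ub Heta).
split => //; apply: (growth_inX (a := a)); last exact: HU.
by split; [lra | exact: Ham].
Qed.

Lemma Upsilon_cont eta : inX n eta -> forall e, 0 < e -> exists delta, 0 < delta /\
  forall eta', inX n eta' ->
    wnorm n (fun k => vsub (eta' k) (eta k)) < delta ->
    wnorm m (fun k => vsub (U eta' k) (U eta k)) < e.
Proof.
move=> Heta e He; have HK : 0 <= K by apply: Kups_nonneg; lra.
exists (e / (K + 1)); split; first by apply: Rdiv_lt_0_compat; lra.
move=> eta' Heta' Hw; set zeta := fun k => vsub (eta' k) (eta k) in Hw *.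
have Hz : inX n zeta := inX_sub Heta Heta'.
have [_ [_ HUz]] := Upsilon_X Hz.
have -> : (fun k => vsub (U eta' k) (U eta k)) = U zeta.
  apply: functional_extensionality => k; apply: functional_extensionality => i.
  have -> : zeta = (fun k => vadd (vscale 1 (eta' k)) (vscale (-1) (eta k))).
    by apply: functional_extensionality => k'; rewrite /zeta; vext.
  rewrite (Upsilon_lin _ _ (Upsilon_X Heta').1 (Upsilon_X Heta).1).
  by rewrite /vsub; ring.
apply: Rle_lt_trans HUz _.
have Hdiv : K * (e / (K + 1)) < e.
  rewrite (_ : K * (e / (K + 1)) = e - e / (K + 1)); last by field; lra.
  have : 0 < e / (K + 1) by apply: Rdiv_lt_0_compat; lra.
  lra.
by have := Rmult_le_compat_l _ _ _ HK (Rlt_le _ _ Hw); lra.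
Qed.
End BoundedOperator.

(* The spectral gap condition n > 1/log(1/λ), i.e. λ e^{1/n} < 1, leaves room for
   rates a, ε with 2ε + 1/n ≤ a ≤ 1/m and λ e^a < 1. *)
Lemma rate_choice (lam eps0 : R) (n m : nat) : 0 < lam < 1 -> (0 < m)%nat -> (m < n)%nat ->
  INR n > 1 / ln (1 / lam) -> 0 < eps0 -> exists a eps,
  0 < eps < eps0 /\ 2 * eps + / INR n <= a /\ a <= / INR m /\ lam * exp a < 1.
Proof.
move=> [Hl0 Hl1] /ltP Hm /ltP Hmn Hn He0.
have HnR : 0 < INR n by apply: lt_0_INR; lia.
have HmR : 0 < INR m by apply: lt_0_INR; lia.
have Hbm : / INR n < / INR m by apply: Rinv_lt_contravar; [nra | apply: lt_INR].
set lnl := ln (1 / lam) in Hn *.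
have Hlnl : 0 < lnl.
  rewrite /lnl -ln_1; apply: ln_increasing; first lra.
  have : 1 / lam * lam = 1 by field; lra.
  nra.
have Hbl : / INR n < lnl.
  have E : / INR n * (INR n * lnl) = lnl by field; lra.
  have : INR n * lnl > 1.
    have E1 : 1 / lnl * lnl = 1 by field; lra.
    by have := Rmult_lt_compat_r lnl _ _ Hlnl Hn; rewrite E1.
  by have := Rinv_0_lt_compat _ HnR; nra.
set a := Rmin (/ INR m) ((/ INR n + lnl) / 2).
have Ha1 : a <= / INR m := Rmin_l _ _.
have Ha2 : / INR n < a by apply: Rmin_glb_lt; lra.
have Ha3 : a <= (/ INR n + lnl) / 2 := Rmin_r _ _.
exists a, (Rmin (eps0 / 2) ((a - / INR n) / 2)); split; [|split; [|split]].
- by split; [apply: Rmin_pos; lra | have := Rmin_l (eps0 / 2) ((a - / INR n) / 2); lra].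
- by have := Rmin_r (eps0 / 2) ((a - / INR n) / 2); lra.
- exact: Ha1.
- have : exp a < exp lnl.
    by apply: exp_increasing; lra.
  rewrite /lnl exp_ln; last by apply: Rdiv_lt_0_compat; lra.
  have : lam * (1 / lam) = 1 by field; lra.
  nra.
Qed.

Theorem lemma3p6 (d : nat) (F G : vec d -> vec d) (DF DG : vec d -> mat d)
  (x : vec d) (lam : R) :
  torus_C1_diffeo F DF G DG ->
  0 < lam < 1 ->
  regularly_hyperbolic DF DG (torbit F G x) lam ->
  forall n m : nat, (0 < m)%nat -> (m < n)%nat -> INR n > 1 / ln (1 / lam) ->
  exists Ups : seqv d -> seqv d,
    (* Ups maps X_n into X_m *)
    (forall eta, inX n eta -> inX m (Ups eta)) /\
    (* linear on X_n *)
    (forall eta eta' (a b : R), inX n eta -> inX n eta' ->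
       forall k i, Ups (fun k => vadd (vscale a (eta k)) (vscale b (eta' k))) k i
                   = a * Ups eta k i + b * Ups eta' k i) /\
    (* continuous X_n -> X_m *)
    (forall eta, inX n eta -> forall eps, 0 < eps -> exists delta, 0 < delta /\
       forall eta', inX n eta' ->
         wnorm n (fun k => vsub (eta' k) (eta k)) < delta ->
         wnorm m (fun k => vsub (Ups eta' k) (Ups eta k)) < eps) /\
    (forall eta, inX n eta ->
       forall k i, Ups (GammaOp DF (torbit F G x) eta) k i = eta k i) /\
    (forall eta, inX n eta ->
       forall k i, GammaOp DF (torbit F G x) (Ups eta) k i = eta k i).
Proof.
move=> HT Hlam [Es [Eu [Hsp [HinvS [HinvU [eps0 [Heps0 Hh]]]]]]] n m Hm Hmn Hn.
have HBA := torbit_DG_DF x HT.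
have Hn0 : (0 < n)%nat by apply: leq_trans Hmn.
have [a [eps [[He He0] [Hab [Ham Hq]]]]] := rate_choice Hlam Hm Hmn Hn Heps0.
have [c0 Hc0] : exists c, hyp_bounds DF DG (torbit F G x) Es Eu lam eps c by apply: Hh; lra.
have Hhyp := hyp_bounds_mono (Rlt_le _ _ Hlam.1) (Rmax_r 1 c0) Hc0.
have Hc := Rmax_l 1 c0.
have HX := Upsilon_X Hsp (Rlt_le _ _ Hlam.1) Hc (Rlt_le _ _ He) Hn0 Hab Ham Hq Hhyp.
exists (Upsilon DF DG (torbit F G x) Hsp); split; [|split; [|split; [|split]]].
- by move=> eta /HX [_ []].
- by move=> eta eta' a' b' /HX [H1 _] /HX [H2 _]; exact: Upsilon_lin.
- move=> eta Heta e' He'.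
  exact: (Upsilon_cont Hsp (Rlt_le _ _ Hlam.1) Hc (Rlt_le _ _ He) Hn0 Hab Ham Hq Hhyp Heta He').
- by move=> eta /HX [Hconv _]; exact: Upsilon_Gamma HinvS HinvU HBA eta Hconv.
- by move=> eta /HX [Hconv _]; exact: Gamma_Upsilon HinvU HBA eta Hconv.
Qed.
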